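(* Let $X$ be a set and $\tau$ a Hausdorff topology on $I(X)$ making it a topological inverse semigroup. For $A\subseteq X$ let $R_A=\{f\circ 1_A: f\in I(X)\}$ with the subspace topology of $\tau$ and $r_A:I(X)\to R_A$, $r_A(f)=f\circ 1_A$. Suppose $r_A$ is an open map for every cofinite $A\subseteq X$. Let $(f_k)_{k\in\mathbb N}$ be a sequence in $I(X)$ and $f\in I(X)$ such that (i) $f_k\to f$ in $\tau_{pp}$, and (ii) there is a cofinite $A\subseteq X$ with $f_k\circ 1_A\to f\circ 1_A$ in $\tau$. Then $f_k\to f$ in $\tau$.
   Context: $I(X)$ is the set of all bijections $f:B\to C$ with $B,C\subseteq X$ (including the empty map), $\mathrm{dom}(f)=B$, $\mathrm{im}(f)=C$, with composition $\mathrm{dom}(f\circ g)=g^{-1}(\mathrm{dom}(f)\cap\mathrm{im}(g))$ and inversion $f\mapsto f^{-1}$. $1_A$ is the identity map on $A$. For $x,y\in X$: $v(x,y)=\{f: x\in\mathrm{dom}(f), f(x)=y\}$, $w_1(x)=\{f: x\notin\mathrm{dom}(f)\}$, $w_2(y)=\{f: y\notin\mathrm{im}(f)\}$; $\tau_{pp}$ is the topology generated by all these sets. A topological inverse semigroup has continuous multiplication and inversion. *)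

From Stdlib Require Import Classical ClassicalEpsilon List Arith.
Set Implicit Arguments.

(* A partial bijection f : B -> C with B, C subsets of X, encoded as a partial
   function X -> option X that is injective on its domain:
   dom f = {x | f x <> None}, im f = {y | exists x, f x = Some y}. *)
Record pinj (X : Type) := PInj {
  pf :> X -> option X;
  pf_inj : forall x y z, pf x = Some z -> pf y = Some z -> x = y }.

Definition comp_fun (X : Type) (f g : X -> option X) (x : X) : option X :=
  match g x with Some y => f y | None => None end.

Lemma comp_inj (X : Type) (f g : pinj X) :
  forall x y z, comp_fun f g x = Some z -> comp_fun f g y = Some z -> x = y.
Proof.
  unfold comp_fun; intros x y z Hx Hy.
  destruct (g x) as [a|] eqn:Ga; [|discriminate].
  destruct (g y) as [b|] eqn:Gb; [|discriminate].
  assert (a = b) by (apply (pf_inj f) with z; assumption). subst b.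
  apply (pf_inj g) with a; assumption.
Qed.

Definition comp (X : Type) (f g : pinj X) : pinj X := @PInj X (comp_fun f g) (@comp_inj X f g).

Definition inv_fun (X : Type) (f : pinj X) (y : X) : option X :=
  match excluded_middle_informative (exists x, f x = Some y) with
  | left H => Some (proj1_sig (constructive_indefinite_description _ H))
  | right _ => None
  end.

Lemma inv_inj (X : Type) (f : pinj X) :
  forall x y z, inv_fun f x = Some z -> inv_fun f y = Some z -> x = y.
Proof.
  unfold inv_fun; intros x y z.
  destruct (excluded_middle_informative (exists a, f a = Some x)) as [Hx|];
    [|discriminate].
  destruct (excluded_middle_informative (exists a, f a = Some y)) as [Hy|];
    [|discriminate].
  destruct (constructive_indefinite_description _ Hx) as [a Ha].
  destruct (constructive_indefinite_description _ Hy) as [b Hb].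
  simpl; intros E1 E2. inversion E1; inversion E2; subst.
  rewrite Ha in Hb; inversion Hb; reflexivity.
Qed.

Definition inv (X : Type) (f : pinj X) : pinj X := @PInj X (inv_fun f) (@inv_inj X f).

Definition id_fun (X : Type) (A : X -> Prop) (x : X) : option X :=
  if excluded_middle_informative (A x) then Some x else None.

Lemma id_inj (X : Type) (A : X -> Prop) :
  forall x y z, id_fun A x = Some z -> id_fun A y = Some z -> x = y.
Proof.
  unfold id_fun; intros x y z.
  destruct (excluded_middle_informative (A x)); [|discriminate].
  destruct (excluded_middle_informative (A y)); [|discriminate].
  intros E1 E2; inversion E1; inversion E2; subst; reflexivity.
Qed.

Definition idA (X : Type) (A : X -> Prop) : pinj X := @PInj X (id_fun A) (@id_inj X A).

Definition cofinite (X : Type) (A : X -> Prop) : Prop :=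
  exists s : list X, forall x, ~ A x -> In x s.

Definition topology (T : Type) (O : (T -> Prop) -> Prop) : Prop :=
  O (fun _ => True) /\
  (forall U V, O U -> O V -> O (fun x => U x /\ V x)) /\
  (forall F : (T -> Prop) -> Prop, (forall U, F U -> O U) ->
     O (fun x => exists U, F U /\ U x)).

Definition hausdorff (T : Type) (O : (T -> Prop) -> Prop) : Prop :=
  forall x y, x <> y -> exists U V, O U /\ O V /\ U x /\ V y /\
    (forall z, U z -> V z -> False).

Definition generated (T : Type) (S : (T -> Prop) -> Prop) (W : T -> Prop) : Prop :=
  forall O, topology O -> (forall U, S U -> O U) -> O W.

Definition prod_open (T : Type) (O : (T -> Prop) -> Prop) (W : T * T -> Prop) : Prop :=
  forall p, W p -> exists U V, O U /\ O V /\ U (fst p) /\ V (snd p) /\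
    (forall a b, U a -> V b -> W (a, b)).

Definition continuous_mul (X : Type) (O : (pinj X -> Prop) -> Prop) : Prop :=
  forall W, O W -> prod_open O (fun p => W (comp (fst p) (snd p))).

Definition continuous_inv (X : Type) (O : (pinj X -> Prop) -> Prop) : Prop :=
  forall W, O W -> O (fun f => W (inv f)).

Definition topological_inverse_semigroup (X : Type)
  (O : (pinj X -> Prop) -> Prop) : Prop :=
  topology O /\ continuous_mul O /\ continuous_inv O.

Definition subspace_open (T : Type) (O : (T -> Prop) -> Prop) (R : T -> Prop)
  (W : T -> Prop) : Prop :=
  exists V, O V /\ forall x, W x <-> (V x /\ R x).

Definition R_ (X : Type) (A : X -> Prop) (g : pinj X) : Prop :=
  exists f, g = comp f (idA A).

Definition rA_open (X : Type) (O : (pinj X -> Prop) -> Prop) (A : X -> Prop) : Prop :=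
  forall U, O U -> subspace_open O (R_ A) (fun g => exists f, U f /\ g = comp f (idA A)).

Definition v_set (X : Type) (x y : X) (f : pinj X) : Prop := f x = Some y.
Definition w1_set (X : Type) (x : X) (f : pinj X) : Prop := f x = None.
Definition w2_set (X : Type) (y : X) (f : pinj X) : Prop := forall x, f x <> Some y.

Definition pp_subbasis (X : Type) (U : pinj X -> Prop) : Prop :=
  (exists x y, U = v_set x y) \/ (exists x, U = w1_set x) \/ (exists y, U = w2_set y).

Definition tau_pp (X : Type) : (pinj X -> Prop) -> Prop := generated (@pp_subbasis X).

Definition converges (T : Type) (O : (T -> Prop) -> Prop) (u : nat -> T) (l : T) : Prop :=
  forall U, O U -> U l -> exists N, forall k, N <= k -> U (u k).

(* Let U be a tau-neighbourhood of f, A the given cofinite set with finite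
   complement s, and B = A ∪ dom f, so that f = f ∘ 1_B.  Continuity of
   multiplication at (f, 1_B) gives neighbourhoods V of f and W of 1_B with
   V·W ⊆ U.
   A gluing identity then shows f_k = g ∘ 1_B ∈ V·W ⊆ U for all large k. *)
From Stdlib Require Import Classical ClassicalEpsilon FunctionalExtensionality
  ProofIrrelevance List Lia.

Lemma pinj_ext {X : Type} (f g : pinj X) : (forall x, f x = g x) -> f = g.
Proof.
  destruct f as [p1 h1], g as [p2 h2]; simpl; intro H.
  assert (p1 = p2) by (apply functional_extensionality; exact H). subst p2.
  f_equal; apply proof_irrelevance.
Qed.

Lemma idA_in {X : Type} (A : X -> Prop) x : A x -> idA A x = Some x.
Proof. simpl; unfold id_fun; destruct (excluded_middle_informative (A x)); tauto. Qed.

Lemma idA_out {X : Type} (A : X -> Prop) x : ~ A x -> idA A x = None.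
Proof. simpl; unfold id_fun; destruct (excluded_middle_informative (A x)); tauto. Qed.

Lemma comp_idA_dom {X : Type} (f : pinj X) (B : X -> Prop) :
  (forall x, f x <> None -> B x) -> comp f (idA B) = f.
Proof.
  intro HB; apply pinj_ext; intro x; cbn [comp pf]; unfold comp_fun.
  destruct (classic (B x)) as [Bx|nBx].
  - now rewrite (idA_in B x Bx).
  - rewrite (idA_out B x nBx). destruct (f x) eqn:Fx; [|reflexivity].
    exfalso; apply nBx, HB; rewrite Fx; discriminate.
Qed.

Lemma glue_restriction {X : Type} {A : X -> Prop} {f g h : pinj X} :
  comp h (idA A) = comp g (idA A) ->
  (forall x, ~ A x -> h x = f x) ->
  (forall x, ~ A x -> forall y, f x = Some y -> g x = Some y) ->
  h = comp g (idA (fun x => A x \/ f x <> None)).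
Proof.
  intros Eg Hoff Hext; apply pinj_ext; intro x; cbn [comp pf]; unfold comp_fun.
  destruct (classic (A x)) as [Ax|nAx].
  - rewrite (idA_in _ x (or_introl Ax)).
    pose proof (f_equal (fun k : pinj X => k x) Eg) as E; cbn [comp pf] in E.
    unfold comp_fun in E; now rewrite (idA_in A x Ax) in E.
  - rewrite (Hoff x nAx). destruct (f x) as [y|] eqn:Fx.
    + rewrite idA_in by (right; rewrite Fx; discriminate).
      now rewrite (Hext x nAx y Fx).
    + rewrite idA_out; [reflexivity|]. rewrite Fx; tauto.
Qed.

Definition eventually (P : nat -> Prop) : Prop :=
  exists N, forall k, N <= k -> P k.

Lemma eventually_and (P Q : nat -> Prop) :
  eventually P -> eventually Q -> eventually (fun k => P k /\ Q k).
Proof.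
  intros [N HN] [M HM]; exists (max N M); intros k Hk; split;
    [apply HN | apply HM]; lia.
Qed.

Lemma eventually_Forall {X : Type} (P : X -> nat -> Prop) (s : list X) :
  (forall x, In x s -> eventually (P x)) ->
  eventually (fun k => forall x, In x s -> P x k).
Proof.
  induction s as [|b s IH]; intro Hs.
  - exists 0; intros k _ x [].
  - destruct (eventually_and _ _ (Hs b (or_introl eq_refl))
                (IH (fun x Hx => Hs x (or_intror Hx)))) as [N HN].
    exists N; intros k Hk x [<-|Hx]; destruct (HN k Hk); auto.
Qed.

Lemma nbhd_Forall {T X : Type} (O : (T -> Prop) -> Prop) (Htop : topology O)
  (t : T) (P : X -> T -> Prop) (s : list X) (V : T -> Prop) :
  O V -> V t ->
  (forall x, In x s -> exists W, O W /\ W t /\ forall a, W a -> P x a) ->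
  exists W, O W /\ W t /\ forall a, W a -> V a /\ forall x, In x s -> P x a.
Proof.
  destruct Htop as [_ [Hint _]].
  induction s as [|b s IH]; intros HV Vt Hs.
  - exists V; split; [|split]; auto. intros a Va; split; [exact Va | intros x []].
  - destruct (IH HV Vt (fun x Hx => Hs x (or_intror Hx))) as [W [HW [Wt HWa]]].
    destruct (Hs b (or_introl eq_refl)) as [Wb [HWb [Wbt HWba]]].
    exists (fun a => W a /\ Wb a); split; [|split]; auto.
    intros a [Wa Wba]; destruct (HWa a Wa) as [Va Hsa]; split; auto.
    intros x [<-|Hx]; auto.
Qed.

Lemma pp_eventually_agree {X : Type} {fs : nat -> pinj X} {f : pinj X}
  (Hpp : converges (@tau_pp X) fs f) (s : list X) :
  eventually (fun k => forall x, In x s -> fs k x = f x).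
Proof.
  apply (eventually_Forall (fun x k => fs k x = f x)); intros b _.
  destruct (f b) as [yb|] eqn:Fb.
  - apply (Hpp (v_set b yb)); [|exact Fb].
    intros O _ HS; apply HS; left; eauto.
  - apply (Hpp (w1_set b)); [|exact Fb].
    intros O _ HS; apply HS; right; left; eauto.
Qed.

Lemma rA_open_lift {X : Type} {tau : (pinj X -> Prop) -> Prop} {A : X -> Prop}
  (Hopen : rA_open tau A) {fs : nat -> pinj X} {f : pinj X}
  (Hconv : converges tau (fun k => comp (fs k) (idA A)) (comp f (idA A)))
  {U : pinj X -> Prop} :
  tau U -> U f ->
  eventually (fun k => exists g, U g /\ comp (fs k) (idA A) = comp g (idA A)).
Proof.
  intros HU Uf.
  destruct (Hopen U HU) as [V [HV HVe]].
  destruct (Hconv V HV) as [N HN].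
  { apply (proj1 (HVe _)); eauto. }
  exists N; intros k Hk.
  destruct (proj2 (HVe _) (conj (HN k Hk) (ex_intro _ (fs k) eq_refl)))
    as [g [Ug Eg]].
  eauto.
Qed.

Section HausdorffInverseSemigroup.

Context {X : Type} {tau : (pinj X -> Prop) -> Prop}.
Hypothesis Htis : topological_inverse_semigroup tau.
Hypothesis Hhaus : hausdorff tau.

Definition sandwich (x y : X) (a : pinj X) : pinj X :=
  comp (comp (idA (fun z => z = y)) a) (idA (fun z => z = x)).

Definition empty_map : pinj X := idA (fun _ => False).

Lemma sandwich_empty (x y : X) (a : pinj X) :
  a x <> Some y -> sandwich x y a = empty_map.
Proof.
  intro Ha; apply pinj_ext; intro z; unfold empty_map.
  rewrite idA_out by tauto; cbn [comp pf sandwich]; unfold comp_fun.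
  destruct (classic (z = x)) as [->|Hz].
  - rewrite idA_in by reflexivity.
    destruct (a x) as [w|]; [|reflexivity].
    apply idA_out; intros ->; tauto.
  - now rewrite idA_out.
Qed.

Lemma sandwich_at (x y : X) (a : pinj X) :
  a x = Some y -> sandwich x y a x = Some y.
Proof.
  intro Ha; cbn [comp pf sandwich]; unfold comp_fun.
  rewrite idA_in by reflexivity; rewrite Ha; now apply idA_in.
Qed.

Lemma sandwich_continuous (x y : X) (g : pinj X) (W : pinj X -> Prop) :
  tau W -> W (sandwich x y g) ->
  exists V, tau V /\ V g /\ forall a, V a -> W (sandwich x y a).
Proof.
  destruct Htis as [_ [Hmul _]]; intros HW Wg.
  destruct (Hmul W HW (comp (idA (fun z => z = y)) g, idA (fun z => z = x)) Wg)
    as [W1 [W2 [HW1 [_ [W1g [W2x H12]]]]]].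
  destruct (Hmul W1 HW1 (idA (fun z => z = y), g) W1g)
    as [V1 [V [_ [HV [V1y [Vg H1]]]]]].
  exists V; repeat split; auto.
  intros a Va; exact (H12 _ _ (H1 _ _ V1y Va) W2x).
Qed.

Lemma v_set_nbhd (g : pinj X) (x y : X) :
  g x = Some y -> exists W, tau W /\ W g /\ forall a, W a -> a x = Some y.
Proof.
  intro Hg.
  assert (Hne : sandwich x y g <> empty_map).
  { intro E; pose proof (sandwich_at x y g Hg) as Hs; rewrite E in Hs.
    unfold empty_map in Hs; rewrite idA_out in Hs by tauto; discriminate. }
  destruct (Hhaus _ _ Hne) as [U0 [V0 [HU0 [_ [Ug [V0e Hdis]]]]]].
  destruct (sandwich_continuous x y g U0 HU0 Ug) as [W [HW [Wg HWa]]].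
  exists W; repeat split; auto.
  intros a Wa; apply NNPP; intro Hn.
  apply (Hdis empty_map); [rewrite <- (sandwich_empty x y a Hn); auto | exact V0e].
Qed.

Lemma nbhd_extending (f : pinj X) (s : list X) (V : pinj X -> Prop) :
  tau V -> V f ->
  exists W, tau W /\ W f /\ forall a, W a -> V a /\
    forall x, In x s -> forall y, f x = Some y -> a x = Some y.
Proof.
  intros HV Vf.
  apply (nbhd_Forall tau (proj1 Htis) f
           (fun x a => forall y, f x = Some y -> a x = Some y) s V HV Vf).
  intros x _; destruct (f x) as [y|] eqn:Fx.
  - destruct (v_set_nbhd f x y Fx) as [W [HW [Wf HWa]]].
    exists W; repeat split; auto.
    intros a Wa y' E; injection E as <-; auto.
  - exists (fun _ => True); repeat split; [apply (proj1 Htis) | discriminate].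
Qed.

End HausdorffInverseSemigroup.

Theorem lemma6p4 (X : Type) (tau : (pinj X -> Prop) -> Prop)
  (Htis : topological_inverse_semigroup tau)
  (Hhaus : hausdorff tau)
  (Hopen : forall A : X -> Prop, cofinite A -> rA_open tau A)
  (fs : nat -> pinj X) (f : pinj X)
  (Hpp : converges (@tau_pp X) fs f)
  (HA : exists A : X -> Prop, cofinite A /\
          converges tau (fun k => comp (fs k) (idA A)) (comp f (idA A))) :
  converges tau fs f.
Proof.
  intros U HU Uf.
  destruct HA as [A [[s Hs] Hconv]].
  set (B := fun x => A x \/ f x <> None).
  assert (EfB : comp f (idA B) = f) by (apply comp_idA_dom; unfold B; tauto).
  destruct (proj1 (proj2 Htis) U HU (f, idA B)) as [V [W [HV [_ [Vf [WB HVW]]]]]];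
    [simpl; now rewrite EfB|].
  destruct (nbhd_extending Htis Hhaus f s V HV Vf) as [V' [HV' [V'f HV'a]]].
  destruct (eventually_and _ _ (rA_open_lift (Hopen A (ex_intro _ s Hs)) Hconv HV' V'f)
              (pp_eventually_agree Hpp s)) as [N HN].
  exists N; intros k Hk.
  destruct (HN k Hk) as [[g [V'g Eg]] Hagree].
  destruct (HV'a g V'g) as [Vg Hext].
  rewrite (glue_restriction Eg (fun x nAx => Hagree x (Hs x nAx))
             (fun x nAx => Hext x (Hs x nAx))).
  exact (HVW _ _ Vg WB).
Qed.
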